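(* Let $\mathbf{M}=(m_{i,j})$ be a $k\times n$ binary matrix satisfying (P1) and (P3). Suppose columns $j_{\max}$ and $j_{\min}$ of $\mathbf{M}$ have, respectively, the maximum and the minimum column weight among all columns of $\mathbf{M}$, and that these two weights differ by at least $2$. Then there exists a row $i_s\in[k]$ with $m_{i_s,j_{\max}}=1$ and $m_{i_s,j_{\min}}=0$ such that the matrix obtained from $\mathbf{M}$ by setting $m_{i_s,j_{\max}}:=0$ and $m_{i_s,j_{\min}}:=1$ still satisfies (P1) and (P3).
   Context: $[n]=\{1,\dots,n\}$. Weight means Hamming weight (number of ones). For a $k\times n$ binary matrix with row supports $R_i=\{j\in[n]: m_{i,j}=1\}$, property (P1) is: each row has weight $n-k+1$; property (P3) is: $\big|\bigcup_{i\in I}R_i\big|\ge n-k+|I|$ for every nonempty $I\subseteq[k]$. (In the paper this is stated as: in every iteration of Algorithm 1, which starts from a matrix satisfying (P1) and (P3) and repeatedly performs such swaps between a maximum-weight and a minimum-weight column while the maximum and minimum column weights differ by at least 2, such a row can always be found.) *)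

From mathcomp Require Import all_boot all_algebra.
Set Implicit Arguments. Unset Strict Implicit. Unset Printing Implicit Defensive.

Definition row_supp (k n : nat) (M : 'M[bool]_(k, n)) (i : 'I_k) : {set 'I_n} :=
  [set j | M i j].

Definition col_weight (k n : nat) (M : 'M[bool]_(k, n)) (j : 'I_n) : nat :=
  #|[set i | M i j]|.

(* (P1): every row has weight n - k + 1 (integer arithmetic, stated without
   subtraction as |R_i| + k = n + 1). *)
Definition P1 (k n : nat) (M : 'M[bool]_(k, n)) : Prop :=
  forall i : 'I_k, #|row_supp M i| + k = n + 1.

(* (P3): |U_{i in I} R_i| >= n - k + |I| for every nonempty I, stated as
   n + |I| <= |U R_i| + k. *)
Definition P3 (k n : nat) (M : 'M[bool]_(k, n)) : Prop :=
  forall I : {set 'I_k}, I != set0 ->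
    n + #|I| <= #|\bigcup_(i in I) row_supp M i| + k.

Definition swap_entries (k n : nat) (M : 'M[bool]_(k, n)) (s : 'I_k)
    (jmax jmin : 'I_n) : 'M[bool]_(k, n) :=
  \matrix_(i, j)
    if i == s then (if j == jmax then false else if j == jmin then true else M i j)
    else M i j.

From mathcomp Require Import all_boot matrix zify.
Set Implicit Arguments. Unset Strict Implicit. Unset Printing Implicit Defensive.

(* Call a row set I tight when |U_{i in I} R_i| = n - k + |I|.  If swapping row s
   of A = {m_{.,jmax} = 1, m_{.,jmin} = 0} breaks (P3) at I, then I is tight, s is
   the only row of I with a 1 in column jmax, and I contains a row b of
   B = {m_{.,jmin} = 1, m_{.,jmax} = 0}.  Tight sets that meet are closed under
   intersection of their covers (submodularity of |U R_i|), so two distinct rows s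
   and t cannot share such a partner b: the column jmax, covered by both sets,
   would be covered by their intersection.  Hence at most |B| rows of A are
   blocked, and |B| < |A| because column jmax is heavier than column jmin. *)

Lemma leq_card_rel (T U : finType) (A : {set T}) (B : {set U}) (R : T -> U -> bool) :
  (forall a, a \in A -> exists2 b, b \in B & R a b) ->
  (forall a a' b, a \in A -> a' \in A -> R a b -> R a' b -> a = a') ->
  #|A| <= #|B|.
Proof.
move=> exR uniqR.
have [->|[a0 /exR [b0 _ _]]] := set_0Vmem A; first by rewrite cards0.
pose f a := odflt b0 [pick b in B | R a b].
have fP a : a \in A -> f a \in B /\ R a (f a).
  move=> /exR [b Bb Rab]; rewrite /f; case: pickP => [b' /andP [] //|/(_ b)].
  by rewrite Bb Rab.
rewrite -(card_in_imset (f := f)).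
  by apply/subset_leq_card/subsetP => _ /imsetP [a /fP [Bfa _] ->].
by move=> a a' /[dup] Aa /fP [_ Ra] /[dup] Aa' /fP [_ Ra'] E; apply: uniqR Ra _; rewrite ?E.
Qed.

Section Cover.
Variables (k n : nat).
Implicit Types (N : 'M[bool]_(k, n)) (I J : {set 'I_k}).

Definition cover N I : {set 'I_n} := \bigcup_(i in I) row_supp N i.

Lemma coverP N I j : reflect (exists2 i, i \in I & N i j) (j \in cover N I).
Proof.
apply: (iffP bigcupP) => [[i Ii]|[i Ii Nij]]; rewrite ?inE; first by exists i.
by exists i; rewrite ?inE.
Qed.

Definition tight N I := #|cover N I| + k <= n + #|I|.

Definition deficient N I := (I != set0) && (#|cover N I| + k < n + #|I|).

Lemma P3_of_nondeficient N : ~~ [exists I, deficient N I] -> P3 N.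
Proof.
by move=> /existsPn nodef I I0; move: (nodef I); rewrite /deficient I0 /= -leqNgt.
Qed.

Lemma cover_setI_tight N I J : P3 N -> tight N I -> tight N J -> I :&: J != set0 ->
  cover N (I :&: J) = cover N I :&: cover N J.
Proof.
move=> P3N tI tJ IJ0.
have sub : cover N (I :&: J) \subset cover N I :&: cover N J.
  apply/subsetP => j /coverP [i]; rewrite !inE => /andP [Ii Ji] Nij.
  by apply/andP; split; apply/coverP; exists i.
apply/eqP; rewrite eqEcard sub /=.
have IJU0 : I :|: J != set0.
  by case/set0Pn: IJ0 => i; rewrite inE => /andP [Ii _]; apply/set0Pn; exists i; rewrite inE Ii.
have := P3N _ IJU0; have := P3N _ IJ0; move: tI tJ; rewrite /tight.
have := cardsUI I J; have := cardsUI (cover N I) (cover N J).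
rewrite /cover -bigcup_setU -!/(cover N _).
move: #|cover N I :&: cover N J| #|cover N (I :&: J)| #|cover N (I :|: J)|.
move: #|cover N I| #|cover N J| #|I :|: J| #|I :&: J| #|I| #|J|; lia.
Qed.

Definition blocking N s j I := [&& tight N I, s \in I & [forall i in I, N i j ==> (i == s)]].

Lemma blocking_eq N s t j I J : P3 N -> N s j -> N t j ->
  blocking N s j I -> blocking N t j J -> I :&: J != set0 -> s = t.
Proof.
move=> P3N Nsj Ntj /and3P [tI Is /forall_inP onlyI] /and3P [tJ Jt /forall_inP onlyJ] IJ0.
have : j \in cover N I :&: cover N J.
  by rewrite inE; apply/andP; split; apply/coverP; [exists s | exists t].
rewrite -cover_setI_tight // => /coverP [r]; rewrite inE => /andP [Ir Jr] Nrj.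
by move/implyP/(_ Nrj)/eqP: (onlyI r Ir) <-; move/implyP/(_ Nrj)/eqP: (onlyJ r Jr).
Qed.

End Cover.

Section Swap.
Variables (k n : nat) (M : 'M[bool]_(k, n)) (s : 'I_k) (jmax jmin : 'I_n).
Implicit Types I : {set 'I_k}.
Local Notation M' := (swap_entries M s jmax jmin).

Lemma swap_entries_id i j : i != s -> M' i j = M i j.
Proof. by move=> /negbTE ns; rewrite mxE ns. Qed.

Hypotheses (Ms_jmax : M s jmax) (Ms_jmin : M s jmin = false).

Lemma neq_jmax_jmin : jmax != jmin.
Proof. by apply: contraTneq Ms_jmax => ->; rewrite Ms_jmin. Qed.

Lemma row_supp_swap : row_supp M' s = jmin |: (row_supp M s :\ jmax).
Proof.
apply/setP => j; rewrite !inE mxE eqxx.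
by case: (eqVneq j jmax) => [->|_]; rewrite ?(negbTE neq_jmax_jmin) //; case: eqP.
Qed.

Lemma P1_swap : P1 M -> P1 M'.
Proof.
move=> P1M i; case: (eqVneq i s) => [->|ns].
  rewrite row_supp_swap cardsU1 !inE Ms_jmin andbF -(P1M s).
  by rewrite [in RHS](cardsD1 jmax) inE Ms_jmax.
have -> : row_supp M' i = row_supp M i by apply/setP => j; rewrite !inE swap_entries_id.
exact: P1M.
Qed.

Lemma cover_setD1_swap I : cover M I :\ jmax \subset cover M' I.
Proof.
apply/subsetP => j; rewrite !inE => /andP [nj /coverP [i Ii Mij]]; apply/coverP; exists i => //.
by rewrite mxE (negbTE nj); case: eqP => // _; case: eqP.
Qed.

Lemma cover_swap_notin I : s \notin I -> cover M I \subset cover M' I.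
Proof.
move=> sI; apply/subsetP => j /coverP [i Ii Mij]; apply/coverP; exists i => //.
by rewrite swap_entries_id //; apply: contraNneq sI => <-.
Qed.

Lemma jmin_cover_swap I : s \in I -> jmin \in cover M' I.
Proof.
by move=> sI; apply/coverP; exists s; rewrite // mxE eqxx eq_sym (negbTE neq_jmax_jmin) eqxx.
Qed.

Lemma deficient_swap_blocking I : P3 M -> deficient M' I ->
  blocking M s jmax I /\ exists2 b, b \in I & M b jmin && ~~ M b jmax.
Proof.
move=> P3M /andP [I0 defI]; have covI := P3M I I0; rewrite -/(cover M I) in covI.
have lt_cover : #|cover M' I| < #|cover M I| by lia.
have sI : s \in I.
  by apply: contraTT lt_cover => /cover_swap_notin/subset_leq_card; rewrite -leqNgt.
have jmax_cov : jmax \in cover M I by apply/coverP; exists s.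
have jmax_ncov : jmax \notin cover M' I.
  apply: contraTN lt_cover => jmax_cov'; rewrite -leqNgt; apply: subset_leq_card.
  apply/subsetP => j covj; case: (eqVneq j jmax) => [-> //|nj].
  by apply: (subsetP (cover_setD1_swap I)); rewrite !inE nj.
have card_cov : #|cover M I| = (#|cover M I :\ jmax|).+1 by rewrite (cardsD1 jmax) jmax_cov.
have le_D1 := subset_leq_card (cover_setD1_swap I).
have only_s : [forall i in I, M i jmax ==> (i == s)].
  apply/forall_inP => i Ii; apply/implyP => Mij; apply: contraNT jmax_ncov => ns.
  by apply/coverP; exists i; rewrite ?swap_entries_id.
have jmin_cov : jmin \in cover M I.
  apply: contraTT lt_cover => njmin; rewrite -leqNgt card_cov.
  have sub : jmin |: (cover M I :\ jmax) \subset cover M' I.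
    by rewrite subUset sub1set jmin_cover_swap // cover_setD1_swap.
  by have := subset_leq_card sub; rewrite cardsU1 !inE (negbTE njmin) andbF.
split; first by rewrite /blocking /tight sI only_s andbT; lia.
case/coverP: jmin_cov => b Ib Mbj; exists b; rewrite // Mbj /=.
apply: contraFN Ms_jmin => Mbjmax.
by move/forall_inP/(_ b Ib)/implyP/(_ Mbjmax)/eqP: only_s => <-.
Qed.

End Swap.

Section Counting.
Variables (k n : nat) (M : 'M[bool]_(k, n)) (jmax jmin : 'I_n).

Definition col_supp j : {set 'I_k} := [set i | M i j].

Definition blocked s := [exists I, deficient (swap_entries M s jmax jmin) I].

Lemma card_blocked : P3 M ->
  #|[set s in col_supp jmax :\: col_supp jmin | blocked s]|
    <= #|col_supp jmin :\: col_supp jmax|.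
Proof.
move=> P3M.
pose partner s b := [exists I, [&& blocking M s jmax I, b \in I & M b jmin]].
apply: (@leq_card_rel _ _ _ _ partner).
  move=> s; rewrite !inE => /andP [/andP [/negbTE Msmin Msmax] /existsP [I defI]].
  have [blockI [b Ib /andP [Mbmin Mbmax]]] := deficient_swap_blocking Msmax Msmin P3M defI.
  by exists b; rewrite ?inE ?Mbmin ?Mbmax //; apply/existsP; exists I; rewrite blockI Ib.
move=> s t b; rewrite !inE => /andP [/andP [_ Msmax] _] /andP [/andP [_ Mtmax] _].
move=> /existsP [I /and3P [bI Ib _]] /existsP [J /and3P [bJ Jb _]].
by apply: blocking_eq bI bJ _ => //; apply/set0Pn; exists b; rewrite inE Ib.
Qed.

End Counting.

Theorem lemma7 (k n : nat) (M : 'M[bool]_(k, n)) (jmax jmin : 'I_n) :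
  P1 M -> P3 M ->
  (forall j : 'I_n, col_weight M j <= col_weight M jmax) ->
  (forall j : 'I_n, col_weight M jmin <= col_weight M j) ->
  col_weight M jmin + 2 <= col_weight M jmax ->
  exists s : 'I_k,
    [/\ M s jmax = true, M s jmin = false,
        P1 (swap_entries M s jmax jmin) & P3 (swap_entries M s jmax jmin)].
Proof.
move=> P1M P3M _ _ heavier.
set X := col_supp M jmax; set Y := col_supp M jmin.
have ltYX : #|Y :\: X| < #|X :\: Y|.
  have := cardsID Y X; have := cardsID X Y; rewrite setIC.
  move: heavier; rewrite /col_weight -!/(col_supp M _) -/X -/Y.
  by move: #|X| #|Y| #|X :&: Y| #|X :\: Y| #|Y :\: X|; lia.
have /subsetPn [s sXY] : ~~ (X :\: Y \subset [set s in X :\: Y | blocked M jmax jmin s]).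
  apply: contraTN ltYX => /subset_leq_card le_blocked; rewrite -leqNgt.
  exact: leq_trans le_blocked (card_blocked jmax jmin P3M).
rewrite inE sXY /= => unblocked; move: sXY; rewrite !inE => /andP [/negbTE Msmin Msmax].
exists s; split => //; first exact: P1_swap Msmax Msmin P1M.
exact: P3_of_nondeficient unblocked.
Qed.
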